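(* Let $G=(V,E)$ be an undirected graph with terminals $s_1,s_2,s_3,s_4\in V$. Let $G'$ be the directed graph with vertex set $V\cup\{s,t\}$ ($s,t$ new) whose arcs are: $(u,v)$ and $(v,u)$ for every edge $uv\in E$, together with the arcs $(s,s_1),(s_1,s),(s_2,s),(s_2,t),(s,s_3),(t,s_3),(t,s_4),(s_4,t)$. Then for every $C\subseteq V\setminus\{s_1,s_2,s_3,s_4\}$: $G-C$ contains no path between $s_i$ and $s_j$ for any $i\neq j$ if and only if $G'-C$ contains no directed path from $s$ to $t$ and no directed path from $t$ to $s$. Consequently, with node weights on $V$ carried over to $G'$ (and terminals $s_1,\dots,s_4,s,t$ not removable), the optimum of 4-terminal node-weighted multiway cut in $G$ equals the optimum node-weighted $st$-bi-cut in $G'$, giving an approximation-preserving reduction from 4-terminal $\textsc{Node-wt-MC}$ to $st$-Bi-Cut.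
   Context: $G-C$ and $G'-C$ denote the graphs obtained by deleting the vertices in $C$. In node-weighted $st$-Bi-Cut, one removes a minimum-weight set of non-terminal vertices so that no directed path from $s$ to $t$ and none from $t$ to $s$ remains. In $\textsc{Node-wt-MC}$ (undirected), one removes a minimum-weight set of non-terminal vertices so that no two distinct terminals remain connected. *)

From HB Require Import structures.
From mathcomp Require Import all_boot all_order all_algebra.
Set Implicit Arguments. Unset Strict Implicit. Unset Printing Implicit Defensive.
Import Order.TTheory GRing.Theory Num.Theory.

(* The undirected graph G on a finite vertex type V is given by a symmetric
   edge relation e.  G - C: keep only edges with both endpoints outside C. *)
Definition del_rel (T : finType) (r : rel T) (C : {set T}) : rel T :=
  [rel x y | [&& r x y, x \notin C & y \notin C]].

Definition vs {V : finType} : V + bool := inr false.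
Definition vt {V : finType} : V + bool := inr true.

Definition arcG' (V : finType) (e : rel V) (s1 s2 s3 s4 : V) : rel (V + bool) :=
  fun x y =>
    match x, y with
    | inl u, inl v => e u v || e v u
    | inr false, inl v => (v == s1) || (v == s3)
    | inr true,  inl v => (v == s3) || (v == s4)
    | inl u, inr false => (u == s1) || (u == s2)
    | inl u, inr true  => (u == s2) || (u == s4)
    | inr _, inr _ => false
    end.

Definition is_multiway_cut (V : finType) (e : rel V) (s1 s2 s3 s4 : V)
    (C : {set V}) : Prop :=
  [/\ s1 \notin C, s2 \notin C, s3 \notin C & s4 \notin C] /\
  (forall i j : 'I_4, i != j ->
     ~~ connect (del_rel e C) (nth s1 [:: s1; s2; s3; s4] i)
                              (nth s1 [:: s1; s2; s3; s4] j)).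

Definition is_st_bicut (V : finType) (e : rel V) (s1 s2 s3 s4 : V)
    (C' : {set V + bool}) : Prop :=
  [/\ inl s1 \notin C', inl s2 \notin C', inl s3 \notin C' & inl s4 \notin C'] /\
  (vs \notin C' /\ vt \notin C') /\
  ~~ connect (del_rel (arcG' e s1 s2 s3 s4) C') vs vt /\
  ~~ connect (del_rel (arcG' e s1 s2 s3 s4) C') vt vs.

(* Node weights on V carried over to G' (s, t get weight 0; they are
   never removed anyway). *)
Definition wG' (R : numDomainType) (V : finType) (w : V -> R) (x : V + bool) : R :=
  match x with inl v => w v | inr _ => 0%R end.

From HB Require Import structures.
From mathcomp Require Import all_boot all_order all_algebra.
Import Order.TTheory GRing.Theory Num.Theory.

(* In G' - C the only arcs leaving s (resp. t) enter s1, s3 (resp. s3, s4),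
   and the only arcs entering t (resp. s) leave s2, s4 (resp. s1, s2); the
   vertices s, t are not adjacent.  Hence a path s ~> t of G' - C is exactly
   an arc s -> a, a path a ~ b of G - C and an arc b -> t, with
   a in {s1, s3} and b in {s2, s4}; likewise t ~> s joins {s3, s4} to
   {s1, s2}.  Together these eight pairs cover all six pairs of distinct
   terminals, so both paths are absent iff C separates the terminals.  The
   weight statement follows because every s-t bi-cut is the image of a set
   of vertices of G, whose weight it inherits. *)

Lemma connect_forward_invariant (T : finType) (r : rel T) (Q : T -> Prop) x y :
  Q x -> (forall a b, Q a -> r a b -> Q b) -> connect r x y -> Q y.
Proof.
move=> Qx Qr /connectP[p rp ->]; elim: p x Qx rp => //= z p IHp x Qx /andP[rxz rp].
exact: IHp (Qr _ _ Qx rxz) rp.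
Qed.

Lemma mem_inl_imset (T U : finType) (A : {set T}) (x : T) :
  ((inl x : T + U) \in [set inl y | y in A]) = (x \in A).
Proof. by rewrite mem_imset //; move=> a b [->]. Qed.

Lemma mem_inr_imset (T U : finType) (A : {set T}) (u : U) :
  ((inr u : T + U) \in [set inl y | y in A]) = false.
Proof. by apply/imsetP => -[]. Qed.

Section Reduction.

Set Implicit Arguments.
Unset Strict Implicit.

Variables (V : finType) (e : rel V) (s1 s2 s3 s4 : V) (C : {set V}).
Hypothesis e_sym : symmetric e.

Local Notation G' := (arcG' e s1 s2 s3 s4).
Local Notation GC := (del_rel e C).
Local Notation G'C := (del_rel G' [set inl x | x in C]).

Lemma connect_del_sym : connect_sym GC.
Proof.
by apply: sym_connect_sym => x y; rewrite /del_rel /= e_sym [(x \notin C) && _]andbC.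
Qed.

Lemma connect_inl (u v : V) : connect GC u v -> connect G'C (inl u) (inl v).
Proof.
move=> /connectP[p up ->]; apply/connectP; exists (map inl p); last by rewrite last_map.
elim: p u up => //= z p IHp u /andP[/and3P[euz uC zC] zp].
by rewrite IHp // andbT /del_rel /= !mem_inl_imset euz uC zC.
Qed.

Definition crossing_path (b0 b1 : bool) :=
  exists a b, [/\ G' (inr b0) (inl a), G' (inl b) (inr b1), a \notin C, b \notin C
                & connect GC a b].

Lemma connect_terminals (b0 b1 : bool) :
  b0 != b1 -> connect G'C (inr b0) (inr b1) <-> crossing_path b0 b1.
Proof.
move=> b01; split=> [|[a [b [b0a bb1 aC bC ab]]]]; last first.
  apply: connect_trans (connect1 _) (connect_trans (connect_inl ab) (connect1 _)).
    by apply/and3P; split; rewrite ?mem_inr_imset ?mem_inl_imset.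
  by apply/and3P; split; rewrite ?mem_inr_imset ?mem_inl_imset.
move=> st; pose reached y := [\/ crossing_path b0 b1, y = inr b0 |
  exists v a, [/\ y = inl v, G' (inr b0) (inl a), a \notin C & connect GC a v]].
suff : reached (inr b1) by case=> [//|[b10]|[v [a []]]] //; rewrite b10 eqxx in b01.
apply: (@connect_forward_invariant _ _ reached _ _ _ _ st); first exact: Or32.
move=> y z [cr|->|[v [a [-> b0a aC av]]]] yz; first exact: Or31.
  case: z yz => [u|b] /and3P[b0u _]; rewrite ?mem_inl_imset => uC.
    by apply: Or33; exists u, u.
  by move: b0u; case: (b0); case: (b).
case: z yz => [u|b] /and3P[vz]; rewrite ?mem_inl_imset => vC zC.
  apply: Or33; exists u, a; split=> //; apply: connect_trans av (connect1 _).
  by rewrite /del_rel /= vC zC !andbT; case/orP: vz => //; rewrite e_sym.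
have [->|nb0] := eqVneq b b0; first exact: Or32.
have b_eq : b = b1 by move: nb0 b01; case: (b); case: (b0); case: (b1).
by apply: Or31; exists a, v; rewrite -b_eq; split=> //; rewrite -mem_inl_imset.
Qed.

Definition separated (a b : V) := ~~ connect GC a b.

Lemma separated_sym a b : separated a b = separated b a.
Proof. by rewrite /separated connect_del_sym. Qed.

Lemma not_connect_terminals (b0 b1 : bool) : b0 != b1 ->
  ~~ connect G'C (inr b0) (inr b1) <->
  (forall a b, G' (inr b0) (inl a) -> G' (inl b) (inr b1) ->
     a \notin C -> b \notin C -> separated a b).
Proof.
move=> b01; split=> [/negP ncr a b b0a bb1 aC bC | sep].
  by apply/negP => ab; apply: ncr; apply/(connect_terminals b01); exists a, b.
apply/negP => /(connect_terminals b01)[a [b [b0a bb1 aC bC]]].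
exact/negP/(sep a b b0a bb1 aC bC).
Qed.

Section TerminalsNotInCut.

Hypothesis terminals_notin : [/\ s1 \notin C, s2 \notin C, s3 \notin C & s4 \notin C].

Lemma not_connect_s_t : ~~ connect G'C vs vt <->
  [/\ separated s1 s2, separated s1 s4, separated s3 s2 & separated s3 s4].
Proof.
have [n1 n2 n3 n4] := terminals_notin.
apply: iff_trans (not_connect_terminals (b0 := false) (b1 := true) isT) _.
split=> [sep | [? ? ? ?] a b /orP[]/eqP-> /orP[]/eqP-> //].
by split; apply: sep; rewrite //= eqxx ?orbT.
Qed.

Lemma not_connect_t_s : ~~ connect G'C vt vs <->
  [/\ separated s3 s1, separated s3 s2, separated s4 s1 & separated s4 s2].
Proof.
have [n1 n2 n3 n4] := terminals_notin.
apply: iff_trans (not_connect_terminals (b0 := true) (b1 := false) isT) _.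
split=> [sep | [? ? ? ?] a b /orP[]/eqP-> /orP[]/eqP-> //].
by split; apply: sep; rewrite //= eqxx ?orbT.
Qed.

Lemma multiway_separatedE :
  (forall i j : 'I_4, i != j ->
     separated (nth s1 [:: s1; s2; s3; s4] i) (nth s1 [:: s1; s2; s3; s4] j))
  <-> [/\ separated s1 s2, separated s1 s4, separated s3 s2 & separated s3 s4] /\
      [/\ separated s3 s1, separated s3 s2, separated s4 s1 & separated s4 s2].
Proof.
split=> [sep | [[s12 s14 s32 s34] [s31 _ s41 s42]]].
  have sepn m n (m4 : m < 4) (n4 : n < 4) : m != n -> separated _ _ :=
    sep (Ordinal m4) (Ordinal n4).
  by split; split; [apply: (sepn 0 1) | apply: (sepn 0 3) | apply: (sepn 2 1)
                   | apply: (sepn 2 3) | apply: (sepn 2 0) | apply: (sepn 2 1)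
                   | apply: (sepn 3 0) | apply: (sepn 3 1)].
by case=> [[|[|[|[|//]]]] ?] [[|[|[|[|//]]]] ?] //= _; rewrite // separated_sym.
Qed.

Lemma multiway_iff_no_terminal_path :
  (forall i j : 'I_4, i != j ->
     ~~ connect GC (nth s1 [:: s1; s2; s3; s4] i) (nth s1 [:: s1; s2; s3; s4] j))
  <-> ~~ connect G'C vs vt /\ ~~ connect G'C vt vs.
Proof.
apply: iff_trans multiway_separatedE _.
by split=> -[/not_connect_s_t ? /not_connect_t_s ?].
Qed.

End TerminalsNotInCut.

Lemma multiway_cut_iff_st_bicut :
  is_multiway_cut e s1 s2 s3 s4 C <-> is_st_bicut e s1 s2 s3 s4 [set inl x | x in C].
Proof.
rewrite /is_multiway_cut /is_st_bicut /vs /vt !mem_inl_imset !mem_inr_imset.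
by split=> [[nT /(multiway_iff_no_terminal_path nT)] | [nT [_ /(multiway_iff_no_terminal_path nT)]]].
Qed.

Lemma sum_wG'_inl (R : numDomainType) (w : V -> R) :
  (\sum_(x in [set inl v | v in C]) wG' w x = \sum_(v in C) w v)%R.
Proof. by rewrite big_imset //; move=> a b _ _ []. Qed.

Lemma st_bicut_inl_imset (C' : {set V + bool}) :
  is_st_bicut e s1 s2 s3 s4 C' -> exists D : {set V}, C' = [set inl x | x in D].
Proof.
move=> [_ [[ns nt] _]]; exists [set v | inl v \in C'].
apply/setP => -[v|b]; first by rewrite mem_inl_imset inE.
by rewrite mem_inr_imset; case: b; apply/negbTE.
Qed.

End Reduction.

Theorem mainTheorem7 (V : finType) (e : rel V) (s1 s2 s3 s4 : V) :
  symmetric e ->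
  uniq [:: s1; s2; s3; s4] ->
  (* the main equivalence, for every C subset of V minus the terminals *)
  (forall C : {set V},
     [/\ s1 \notin C, s2 \notin C, s3 \notin C & s4 \notin C] ->
     (forall i j : 'I_4, i != j ->
        ~~ connect (del_rel e C) (nth s1 [:: s1; s2; s3; s4] i)
                                 (nth s1 [:: s1; s2; s3; s4] j))
     <->
     (~~ connect (del_rel (arcG' e s1 s2 s3 s4) [set inl x | x in C]) vs vt /\
      ~~ connect (del_rel (arcG' e s1 s2 s3 s4) [set inl x | x in C]) vt vs))
  /\
  (* consequently the optima coincide, for any node weights *)
  (forall (R : realDomainType) (w : V -> R) (k : R),
     (exists C : {set V}, is_multiway_cut e s1 s2 s3 s4 C /\
                          (\sum_(v in C) w v <= k)%R)
     <->
     (exists C' : {set V + bool}, is_st_bicut e s1 s2 s3 s4 C' /\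
                          (\sum_(x in C') wG' w x <= k)%R)).
Proof.
move=> e_sym _; split=> [C|R w k]; first exact: multiway_iff_no_terminal_path.
split=> [[C [cut Ck]] | [C' [cut C'k]]].
  exists [set inl x | x in C].
  by rewrite sum_wG'_inl; split=> //; apply/multiway_cut_iff_st_bicut.
have [C C'E] := st_bicut_inl_imset cut; rewrite C'E in cut C'k.
by exists C; rewrite -sum_wG'_inl; split=> //; apply/multiway_cut_iff_st_bicut.
Qed.
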